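(* Let $L$ be a construction of an ASC-hypergraph $H$, let $Y\in L$ and $Z=\bigcup H\setminus Y$. Then $L_Y$ and ${}_Z L$ are the unique constructions $K$ of $H_Y$ and $J$ of ${}_Z H$ such that $K\ast J=L$.
   Context: A hypergraph is a finite set $H$ of nonempty subsets of some finite set; its carrier is $\bigcup H$. For a family $F$ and set $Y$, $F_Y=\{X\in F\mid X\subseteq Y\}$, and ${}_Z F=\{X\cap Z\mid X\in F,\ X\cap Z\neq\emptyset\}$. For $X\subseteq\bigcup H$, $X\cup_H Y=X\cup Y$ if $X\cup Y\in H$, and $X\cup_H Y=X$ otherwise. For constructions $K$ of $H_Y$ and $J$ of ${}_Z H$ the continuation is $K\ast J=K\cup\{X\cup_H Y\mid X\in J\}$. A hypergraph partition of $H$ is a partition $\{H_1,\dots,H_n\}$ ($n\ge0$) of the set $H$ with $\{\bigcup H_1,\dots,\bigcup H_n\}$ a partition of $\bigcup H$; $H$ is connected if it has exactly one hypergraph partition; the finest hypergraph partition is the unique one whose blocks are connected. $H$ is atomic if $\{x\}\in H$ for all $x\in\bigcup H$; saturated if $X_1,X_2\in H$ with $X_1\cap X_2\neq\emptyset$ imply $X_1\cup X_2\in H$. An ASC-hypergraph is one that is atomic, saturated and connected. Constructions of an atomic $H$, by induction on $|\bigcup H|$: (0) $\emptyset$ is the only construction of $\emptyset$; (1) if $|\bigcup H|\ge1$, $H$ connected, $x\in\bigcup H$, $K$ a construction of $H_{\bigcup H\setminus\{x\}}$, then $K\cup\{\bigcup H\}$ is a construction of $H$; (2) if $H$ is not connected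 with finest hypergraph partition $\{H_1,\dots,H_n\}$, $n\ge2$, and $K_i$ is a construction of $H_i$, then $K_1\cup\dots\cup K_n$ is a construction of $H$. *)

From mathcomp Require Import all_boot.
Set Implicit Arguments. Unset Strict Implicit. Unset Printing Implicit Defensive.

Section Hyper.
Variable T : finType.
Implicit Types (H F : {set {set T}}) (P : {set {set {set T}}}) (X Y Z : {set T}).

Definition hypergraph H : Prop := set0 \notin H.

Definition restr F (Y : {set T}) : {set {set T}} := [set X in F | X \subset Y].

Definition trace Z F : {set {set T}} := [set X :&: Z | X in F & X :&: Z != set0].

Definition hunion H X Y : {set T} := if X :|: Y \in H then X :|: Y else X.

Definition cont H Y (K J : {set {set T}}) : {set {set T}} := K :|: [set hunion H X Y | X in J].

(* hypergraph partition: a partition P of the set H whose carriers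
   {cover B | B in P} form a partition of cover H (pairwise disjoint;
   nonemptiness and covering are then automatic). *)
Definition hpartition H P : Prop :=
  partition P H /\
  (forall B1 B2, B1 \in P -> B2 \in P -> B1 != B2 -> [disjoint cover B1 & cover B2]).

Definition connected H : Prop :=
  exists P, hpartition H P /\ forall P', hpartition H P' -> P' = P.

Definition finest_hpartition H P : Prop :=
  hpartition H P /\ forall B, B \in P -> connected B.

Definition atomic H : Prop := forall x, x \in cover H -> [set x] \in H.

Definition saturated H : Prop :=
  forall X1 X2, X1 \in H -> X2 \in H -> X1 :&: X2 != set0 -> X1 :|: X2 \in H.

Definition ASC H : Prop := [/\ hypergraph H, atomic H, saturated H & connected H].

Inductive construction : {set {set T}} -> {set {set T}} -> Prop :=
| constr_empty : construction set0 set0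
| constr_conn H x K :
    hypergraph H -> atomic H ->
    0 < #|cover H| -> connected H -> x \in cover H ->
    construction (restr H (cover H :\ x)) K ->
    construction H (K :|: [set cover H])
| constr_split H P (Kf : {set {set T}} -> {set {set T}}) :
    hypergraph H -> atomic H ->
    ~ connected H -> finest_hpartition H P -> 2 <= #|P| ->
    (forall B, B \in P -> construction B (Kf B)) ->
    construction H (\bigcup_(B in P) Kf B).

End Hyper.

(* A construction L of a saturated hypergraph H is a laminar family of members
   of H in which no two disjoint members have their union in H.  Given Y in L
   and Z = cover H \ Y, a member W of L not contained in Y is therefore
   recovered from its trace W :&: Z: if Y is contained in W then
   (W :&: Z) :|: Y = W lies in H, and if W is disjoint from Y then W :|: Y
   does not.  Hence L = L_Y * _Z L.  That L_Y and _Z L are constructions of H_Y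
   and _Z H follows by induction on L: restriction and trace commute with
   deleting a point from a connected hypergraph and with splitting it into its
   connected blocks, and the trace of a connected saturated block stays
   connected because it contains its carrier.  Uniqueness is immediate: the
   members of K * J contained in Y are those of K, and the traces on Z of the
   members of K * J are those of J. *)

From mathcomp Require Import all_boot.
Set Implicit Arguments. Unset Strict Implicit. Unset Printing Implicit Defensive.

Lemma disjoint_setDr (U : finType) (A B : {set U}) : [disjoint A & B :\: A].
Proof. by rewrite disjoint_sym disjoints_subset setDE subsetIr. Qed.

Section Hypergraphs.
Variable T : finType.
Implicit Types (H F L K J B : {set {set T}}) (P : {set {set {set T}}}) (V W X Y Z : {set T}).

Lemma coverP F x : reflect (exists2 X, X \in F & x \in X) (x \in cover F).
Proof. exact: bigcupP. Qed.

Lemma sub_cover F X : X \in F -> X \subset cover F.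
Proof. exact: bigcup_sup. Qed.

Lemma coverS F1 F2 : F1 \subset F2 -> cover F1 \subset cover F2.
Proof. by move=> sF; apply/bigcupsP => X /(subsetP sF)/sub_cover. Qed.

Lemma hypergraph_neq0 F X : hypergraph F -> X \in F -> X != set0.
Proof. by move=> hF; apply: contraTneq => ->. Qed.

Lemma hypergraphS F1 F2 : F1 \subset F2 -> hypergraph F2 -> hypergraph F1.
Proof. by move=> sF; apply: contra => /(subsetP sF). Qed.

Lemma cover_eq0 F : hypergraph F -> (cover F == set0) = (F == set0).
Proof.
move=> hF; apply/idP/eqP => [|->]; last by rewrite /cover big_set0.
apply: contraTeq => /set0Pn[X XF]; case/set0Pn: (hypergraph_neq0 hF XF) => x xX.
by apply/set0Pn; exists x; apply/coverP; exists X.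
Qed.

Lemma disjoint_subset_eq0 V W : [disjoint V & W] -> V \subset W -> V = set0.
Proof. by move=> /disjoint_setI0 VW /setIidPl VsW; rewrite -VsW. Qed.

(** * Restriction and trace *)

Lemma in_restr F Y X : (X \in restr F Y) = (X \in F) && (X \subset Y).
Proof. by rewrite inE. Qed.

Lemma restr_subset F Y : restr F Y \subset F.
Proof. by apply/subsetP => X; rewrite in_restr => /andP[]. Qed.

Lemma cover_restr F Y : cover (restr F Y) \subset Y.
Proof. by apply/bigcupsP => X; rewrite in_restr => /andP[]. Qed.

Lemma cover_restr_atomic H V : atomic H -> V \subset cover H -> cover (restr H V) = V.
Proof.
move=> atH sVH; apply/eqP; rewrite eqEsubset cover_restr /=.
apply/subsetP => x xV; apply/coverP; exists [set x]; last exact: set11.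
by rewrite in_restr sub1set xV atH ?(subsetP sVH).
Qed.

Lemma restr_id F Y : cover F \subset Y -> restr F Y = F.
Proof.
move=> sFY; apply/setP => X; rewrite in_restr andb_idr //.
by move=> /sub_cover sXF; apply: subset_trans sFY.
Qed.

Lemma restr_restr F Y V : Y \subset V -> restr (restr F V) Y = restr F Y.
Proof.
move=> sYV; apply/setP => X; rewrite !in_restr -andbA; congr (_ && _).
by rewrite andb_idl // => /subset_trans; apply.
Qed.

Lemma restr_setU1 K V Y : ~~ (V \subset Y) -> restr (K :|: [set V]) Y = restr K Y.
Proof.
move=> nsVY; apply/setP => X; rewrite !in_restr !inE.
by case: eqP => [->|]; rewrite ?orbF ?(negbTE nsVY) ?andbF.
Qed.

Lemma restr_saturated H Y : saturated H -> saturated (restr H Y).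
Proof.
move=> satH X1 X2; rewrite !in_restr => /andP[X1H sX1] /andP[X2H sX2] meet.
by rewrite satH // subUset sX1.
Qed.

Lemma traceP Z F X :
  reflect (exists2 W, W \in F & X = W :&: Z /\ X != set0) (X \in trace Z F).
Proof.
apply: (iffP imsetP) => [[W] | [W WF [-> neX]]].
  by rewrite inE => /andP[WF neX] ->; exists W.
by exists W; rewrite // inE WF.
Qed.

Lemma trace_hypergraph Z F : hypergraph (trace Z F).
Proof. by apply/negP => /traceP[W _ [_ /eqP]]. Qed.

Lemma cover_trace Z F : cover (trace Z F) = cover F :&: Z.
Proof.
apply/setP => x; rewrite inE; apply/coverP/andP.
  move=> [_ /traceP[W WF [-> _]]]; rewrite inE => /andP[xW xZ].
  by split=> //; apply/coverP; exists W.
move=> [/coverP[W WF xW] xZ]; exists (W :&: Z); last by rewrite inE xW.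
by apply/traceP; exists W => //; split=> //; apply/set0Pn; exists x; rewrite inE xW.
Qed.

Lemma trace_eq0 Z F : (trace Z F == set0) = (cover F :&: Z == set0).
Proof. by rewrite -cover_trace (cover_eq0 (trace_hypergraph Z F)). Qed.

Lemma trace_id Z F : hypergraph F -> cover F \subset Z -> trace Z F = F.
Proof.
move=> hF sFZ; have XZ X : X \in F -> X :&: Z = X.
  by move=> /sub_cover sXF; apply/setIidPl/(subset_trans sXF).
apply/setP => X; apply/traceP/idP => [[W WF [-> _]] | XF]; first by rewrite XZ.
by exists X; rewrite ?XZ ?(hypergraph_neq0 hF).
Qed.

Lemma traceU Z F1 F2 : trace Z (F1 :|: F2) = trace Z F1 :|: trace Z F2.
Proof.
apply/setP => X; rewrite inE; apply/traceP/orP.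
  by move=> [W]; rewrite inE => /orP[] WF h; [left | right]; apply/traceP; exists W.
by case=> /traceP[W WF h]; exists W; rewrite // inE WF ?orbT.
Qed.

Lemma trace_set1 Z V : V :&: Z != set0 -> trace Z [set V] = [set V :&: Z].
Proof.
move=> neVZ; apply/setP => X; rewrite in_set1; apply/traceP/eqP.
  by move=> [W]; rewrite in_set1 => /eqP-> [].
by move=> ->; exists V; rewrite ?set11.
Qed.

Lemma trace_bigcup Z P (G : {set {set T}} -> {set {set T}}) :
  trace Z (\bigcup_(B in P) G B) = \bigcup_(B in P) trace Z (G B).
Proof.
apply/setP => X; apply/traceP/bigcupP.
  by move=> [W /bigcupP[B BP WG] h]; exists B => //; apply/traceP; exists W.
by move=> [B BP /traceP[W WG h]]; exists W => //; apply/bigcupP; exists B.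
Qed.

Lemma trace_atomic Z H : atomic H -> atomic (trace Z H).
Proof.
move=> atH x; rewrite cover_trace inE => /andP[xH xZ]; apply/traceP.
exists [set x]; first exact: atH.
split; first by apply/setP => y; rewrite !inE; case: eqP => // ->.
by apply/set0Pn; exists x; rewrite !inE eqxx.
Qed.

Lemma restr_trace Z H x : x \in Z ->
  restr (trace Z H) (cover H :&: Z :\ x) = trace Z (restr H (cover H :\ x)).
Proof.
move=> xZ; apply/setP => X; rewrite in_restr; apply/andP/traceP.
  move=> [/traceP[W WH [eX neX]] sX]; exists W => //.
  rewrite in_restr WH; apply/subsetP => y yW; rewrite !inE (subsetP (sub_cover WH)) // andbT.
  apply/eqP => yx; have /(subsetP sX) : y \in X by rewrite eX inE yW yx.
  by rewrite !inE yx eqxx.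
move=> [W]; rewrite in_restr => /andP[WH sW] [eX neX]; split; first by apply/traceP; exists W.
rewrite eX; apply/subsetP => y; rewrite !inE => /andP[/(subsetP sW)].
by rewrite !inE => /andP[-> ->] ->.
Qed.

(** * Hypergraph partitions and connectedness *)

Section HPartition.
Variables (H : {set {set T}}) (P : {set {set {set T}}}).
Hypothesis hpH : hpartition H P.

Lemma hpartition_cover : cover P = H.
Proof. by case: hpH => /and3P[/eqP]. Qed.

Lemma hpartition_neq0 B : B \in P -> B != set0.
Proof. by case: hpH => /and3P[_ _ P0] _ BP; apply: contraNneq P0 => <-. Qed.

Lemma hpartition_subset B : B \in P -> B \subset H.
Proof. by rewrite -hpartition_cover; apply: bigcup_sup. Qed.

Lemma hpartition_cover_subset B : B \in P -> cover B \subset cover H.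
Proof. by move=> /hpartition_subset/coverS. Qed.

Lemma hpartition_block X : X \in H -> exists2 B, B \in P & X \in B.
Proof. by rewrite -hpartition_cover => /bigcupP. Qed.

Lemma hpartition_eq B1 B2 x : B1 \in P -> B2 \in P ->
  x \in cover B1 -> x \in cover B2 -> B1 = B2.
Proof.
case: hpH => _ disP B1P B2P x1 x2; apply/eqP; apply: contraTT x2 => neB.
by rewrite (disjointFr (disP _ _ B1P B2P neB) x1).
Qed.

Lemma hpartition_eq_subset B1 B2 X : B1 \in P -> B2 \in P -> X != set0 ->
  X \subset cover B1 -> X \subset cover B2 -> B1 = B2.
Proof.
move=> B1P B2P /set0Pn[x xX] sX1 sX2.
exact: hpartition_eq B1P B2P (subsetP sX1 x xX) (subsetP sX2 x xX).
Qed.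

Lemma saturated_block B : hypergraph H -> saturated H -> B \in P -> saturated B.
Proof.
move=> hH satH BP X1 X2 X1B X2B meet; have sBH := subsetP (hpartition_subset BP).
have [B' B'P UB'] := hpartition_block (satH _ _ (sBH _ X1B) (sBH _ X2B) meet).
suff -> : B = B' by [].
apply: hpartition_eq_subset BP B'P (hypergraph_neq0 hH (sBH _ X1B)) (sub_cover X1B) _.
exact: subset_trans (subsetUl _ _) (sub_cover UB').
Qed.

End HPartition.

Lemma hpartition_set1 H : H != set0 -> hpartition H [set H].
Proof.
move=> neH; split; first by rewrite /partition cover1 eqxx trivIset1 in_set1 eq_sym neH.
by move=> B1 B2; rewrite !in_set1 => /eqP-> /eqP->; rewrite eqxx.
Qed.

Lemma connected_hpartition H P : connected H -> H != set0 -> hpartition H P -> P = [set H].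
Proof.
by move=> [Q [_ uniqQ]] neH hpP; rewrite (uniqQ _ hpP) (uniqQ _ (hpartition_set1 neH)).
Qed.

Lemma hpartition_not_connected H P : hpartition H P -> 1 < #|P| -> ~ connected H.
Proof.
move=> hpP P2 connH; have neH : H != set0.
  case/card_gt0P: (ltnW P2) => B BP; case/set0Pn: (hpartition_neq0 hpP BP) => X XB.
  by apply/set0Pn; exists X; apply: (subsetP (hpartition_subset hpP BP)).
by move: P2; rewrite (connected_hpartition connH neH hpP) cards1.
Qed.

Lemma hpartition_split H B : B \subset H -> B != set0 -> H :\: B != set0 ->
  [disjoint cover B & cover (H :\: B)] -> hpartition H [set B; H :\: B].
Proof.
move=> sBH neB neC disBC; split; last first.
  move=> B1 B2; rewrite !inE => /orP[]/eqP-> /orP[]/eqP->; rewrite ?eqxx // => _.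
  by rewrite disjoint_sym.
apply/and3P; split; last by rewrite !inE negb_or eq_sym neB eq_sym neC.
  apply/eqP/setP => X; apply/bigcupP/idP => [[B']|XH].
    by rewrite !inE => /orP[]/eqP-> => [/(subsetP sBH)|/setDP[]].
  case XB: (X \in B); first by exists B; rewrite ?set21.
  by exists (H :\: B); rewrite ?set22 // inE XB.
apply/trivIsetP => B1 B2; rewrite !inE => /orP[]/eqP-> /orP[]/eqP->; rewrite ?eqxx // => _.
  exact: disjoint_setDr.
by rewrite disjoint_sym disjoint_setDr.
Qed.

Lemma connected_split H B : connected H -> B \subset H -> B != set0 ->
  [disjoint cover B & cover (H :\: B)] -> B = H.
Proof.
move=> connH sBH neB disBC; have [/eqP|neC] := eqVneq (H :\: B) set0.
  by rewrite setD_eq0 => sHB; apply/eqP; rewrite eqEsubset sBH.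
have neH : H != set0 by apply: contraNneq neB => H0; rewrite -subset0 -H0.
have := connected_hpartition connH neH (hpartition_split sBH neB neC disBC).
by move/setP/(_ B); rewrite !inE eqxx => /esym/eqP.
Qed.

(* A member M of maximal size absorbs every member it meets, so the members
   inside M are separated from the others: by connectedness M is the carrier. *)
Lemma connected_cover_mem H : saturated H -> connected H -> H != set0 -> cover H \in H.
Proof.
move=> satH connH /set0Pn[X0 X0H].
have [M MH maxM] := arg_maxnP (fun X : {set T} => #|X|) X0H.
have meetM X : X \in H -> X :&: M != set0 -> X \subset M.
  move=> XH meet; have XMH := satH _ _ XH MH meet.
  have /eqP <- : X :|: M == M by rewrite eq_sym eqEcard subsetUr; exact: maxM.
  exact: subsetUl.
have eHM : restr H M = H.
  apply: connected_split; rewrite ?restr_subset //.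
    by apply/set0Pn; exists M; rewrite in_restr subxx andbT.
  apply: disjointWl (cover_restr H M) _; apply/bigcup_disjoint => X /setDP[XH].
  rewrite in_restr XH /= -setI_eq0 setIC.
  by apply: contraNT; apply: meetM.
have coverHM : cover H = M.
  by apply/eqP; rewrite eqEsubset -{1}eHM cover_restr sub_cover.
by rewrite coverHM.
Qed.

Lemma cover_mem_connected H : hypergraph H -> cover H \in H -> connected H.
Proof.
move=> hH cH; exists [set H]; split.
  by apply: hpartition_set1; apply/set0Pn; exists (cover H).
move=> P hpP; have [B0 B0P HB0] := hpartition_block hpP cH.
have eqB0 B : B \in P -> B = B0.
  move=> BP; case/set0Pn: (hpartition_neq0 hpP BP) => X XB.
  have XH := subsetP (hpartition_subset hpP BP) X XB.
  apply: (hpartition_eq_subset hpP BP B0P (hypergraph_neq0 hH XH) (sub_cover XB)).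
  exact: (subset_trans (sub_cover XH) (sub_cover HB0)).
have eP : P = [set B0] by apply/setP => B; rewrite in_set1; apply/idP/eqP => [/eqB0|->].
by rewrite -(hpartition_cover hpP) eP cover1.
Qed.

Lemma trace_connected Z B : saturated B -> connected B -> trace Z B != set0 ->
  connected (trace Z B).
Proof.
move=> satB connB neT; have neBZ := neT; rewrite trace_eq0 in neBZ.
have neB : B != set0 by apply: contraNneq neBZ => ->; rewrite /cover big_set0 set0I.
apply: cover_mem_connected (trace_hypergraph _ _) _; rewrite cover_trace.
by apply/traceP; exists (cover B); rewrite ?connected_cover_mem.
Qed.

(** * Constructions *)

Definition laminar L := forall W1 W2, W1 \in L -> W2 \in L ->
  [|| W1 \subset W2, W2 \subset W1 | [disjoint W1 & W2]].

Definition separated H L := forall W1 W2, W1 \in L -> W2 \in L ->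
  [disjoint W1 & W2] -> W1 :|: W2 \notin H.

Lemma construction_hypergraph H L : construction H L -> hypergraph L.
Proof.
elim=> {H L} [|H x K _ _ c0 _ _ _ hK|H P Kf _ _ _ _ _ _ hKf].
- by rewrite /hypergraph inE.
- by rewrite /hypergraph !inE negb_or hK eq_sym -card_gt0.
- by apply/negP => /bigcupP[B BP]; apply/negP; apply: hKf.
Qed.

Lemma construction_cover H L : construction H L -> cover L \subset cover H.
Proof.
elim=> {H L} [|H x K _ _ _ _ _ _ sK|H P Kf _ _ _ [hpP _] _ _ sKf]; first exact: subxx.
  rewrite /cover bigcup_setU big_set1 subUset subxx andbT.
  exact: (subset_trans sK (coverS (restr_subset _ _))).
apply/bigcupsP => W /bigcupP[B BP /sub_cover sWK].
exact: (subset_trans sWK (subset_trans (sKf B BP) (hpartition_cover_subset hpP BP))).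
Qed.

Lemma construction_subset H L : construction H L -> saturated H -> L \subset H.
Proof.
elim=> {H L} [|H x K hH _ c0 connH _ _ IH|H P Kf hH _ _ [hpP _] _ _ IH] satH.
- exact: sub0set.
- rewrite subUset sub1set connected_cover_mem ?andbT //.
    exact: (subset_trans (IH (restr_saturated satH)) (restr_subset _ _)).
  by rewrite -(cover_eq0 hH) -card_gt0.
- apply/bigcupsP => B BP.
  exact: (subset_trans (IH B BP (saturated_block hpP hH satH BP)) (hpartition_subset hpP BP)).
Qed.

Lemma construction_laminar H L : construction H L -> laminar L.
Proof.
elim=> {H L} [|H x K _ _ _ _ _ cK IH|H P Kf _ _ _ [hpP _] _ cKf IH];
  first by move=> W1; rewrite inE.
  have sWH W : W \in K -> W \subset cover H.
    move=> /sub_cover sWK.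
    exact: (subset_trans sWK (subset_trans (construction_cover cK) (coverS (restr_subset _ _)))).
  move=> W1 W2; rewrite !inE => /orP[W1K|/eqP->] /orP[W2K|/eqP->].
  - exact: IH.
  - by rewrite sWH.
  - by rewrite sWH ?orbT.
  - by rewrite subxx.
move=> W1 W2 /bigcupP[B1 B1P W1K] /bigcupP[B2 B2P W2K].
have [eB|neB] := eqVneq B1 B2; first by rewrite eB in W1K; exact: (IH _ B2P).
have sWB W B : B \in P -> W \in Kf B -> W \subset cover B.
  by move=> BP /sub_cover sWK; exact: (subset_trans sWK (construction_cover (cKf B BP))).
case: hpP => _ /(_ _ _ B1P B2P neB) disB.
by rewrite (disjointW (sWB _ _ B1P W1K) (sWB _ _ B2P W2K) disB) !orbT.
Qed.

Lemma construction_separated H L : construction H L -> separated H L.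
Proof.
elim=> {H L} [|H x K _ _ c0 _ _ cK IH|H P Kf _ _ _ [hpP _] _ cKf IH];
  first by move=> W1; rewrite inE.
  have sKV : cover K \subset cover H :\ x.
    exact: (subset_trans (construction_cover cK) (cover_restr _ _)).
  have meetH W : W \in K -> ~~ [disjoint W & cover H].
    move=> WK; apply: contra (hypergraph_neq0 (construction_hypergraph cK) WK) => disW.
    apply/eqP/(disjoint_subset_eq0 disW).
    exact: (subset_trans (sub_cover WK) (subset_trans sKV (subsetDl _ _))).
  move=> W1 W2; rewrite !inE => /orP[W1K|/eqP->] /orP[W2K|/eqP->] disW.
  - move: (IH _ _ W1K W2K disW); rewrite in_restr subUset.
    by rewrite !(subset_trans (sub_cover _) sKV) // !andbT.
  - by case/negP: (meetH _ W1K).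
  - by rewrite disjoint_sym in disW; case/negP: (meetH _ W2K).
  - by move: c0; rewrite (disjoint_subset_eq0 disW (subxx _)) cards0.
move=> W1 W2 /bigcupP[B1 B1P W1K] /bigcupP[B2 B2P W2K] disW; apply/negP => UH.
have [B BP UB] := hpartition_block hpP UH.
have inB W B' : B' \in P -> W \in Kf B' -> W \subset W1 :|: W2 -> B' = B.
  move=> B'P WK sWU.
  have neW := hypergraph_neq0 (construction_hypergraph (cKf _ B'P)) WK.
  apply: (hpartition_eq_subset hpP B'P BP neW).
    exact: (subset_trans (sub_cover WK) (construction_cover (cKf _ B'P))).
  exact: (subset_trans sWU (sub_cover UB)).
move: (inB _ _ B1P W1K (subsetUl _ _)) (inB _ _ B2P W2K (subsetUr _ _)) => eB1 eB2.
by subst B1 B2; move: (IH _ BP _ _ W1K W2K disW); rewrite UB.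
Qed.

Lemma construction_hpartition H P (Kf : {set {set T}} -> {set {set T}}) :
  hypergraph H -> atomic H -> hpartition H P -> (forall B, B \in P -> connected B) ->
  (forall B, B \in P -> construction B (Kf B)) -> construction H (\bigcup_(B in P) Kf B).
Proof.
move=> hH atH hpP connP cKf; have [P2|] := ltnP 1 #|P|.
  exact: constr_split hH atH (hpartition_not_connected hpP P2) (conj hpP connP) P2 cKf.
rewrite leq_eqVlt ltnS leqn0 => /orP[/cards1P[B eP]|/eqP/cards0_eq eP].
  have eB : B = H by rewrite -(hpartition_cover hpP) eP cover1.
  by rewrite eP big_set1 -eB; apply: cKf; rewrite eP set11.
have -> : H = set0 by rewrite -(hpartition_cover hpP) eP /cover big_set0.
by rewrite eP big_set0; constructor.
Qed.

Lemma construction_hpartition_imset H P (h Kf : {set {set T}} -> {set {set T}}) :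
  hypergraph H -> atomic H -> hpartition H (h @: P) -> {in P &, injective h} ->
  (forall B, B \in P -> connected (h B)) -> (forall B, B \in P -> construction (h B) (Kf B)) ->
  construction H (\bigcup_(B in P) Kf B).
Proof.
move=> hH atH hpP injh connh cKf.
pose Kf' B' := \bigcup_(B in P | h B == B') Kf B.
have Kf'E B : B \in P -> Kf' (h B) = Kf B.
  move=> BP; rewrite /Kf' (big_pred1 B) // => B1 /=.
  by apply/andP/eqP => [[B1P /eqP /injh] | ->]; [apply | rewrite BP eqxx].
have -> : \bigcup_(B in P) Kf B = \bigcup_(B' in h @: P) Kf' B'.
  by rewrite big_imset //; apply: eq_bigr => B BP; rewrite Kf'E.
apply: construction_hpartition hH atH hpP _ _ => _ /imsetP[B BP ->]; first exact: connh.
by rewrite Kf'E //; apply: cKf.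
Qed.

(** * Restricting and tracing a construction *)

Lemma restr_bigcup_block P (G : {set {set T}} -> {set {set T}}) B0 Y : B0 \in P ->
    (forall B, B \in P -> hypergraph (G B)) ->
    (forall B1 B2, B1 \in P -> B2 \in P -> B1 != B2 ->
       [disjoint cover (G B1) & cover (G B2)]) ->
  Y \subset cover (G B0) -> restr (\bigcup_(B in P) G B) Y = restr (G B0) Y.
Proof.
move=> B0P hG disG sY; apply/setP => X; rewrite !in_restr.
apply/andP/andP => [[/bigcupP[B BP XG] sXY] | [XG sXY]]; last first.
  by split=> //; apply/bigcupP; exists B0.
split=> //; have [<- // | neB] := eqVneq B B0.
case/set0Pn: (hypergraph_neq0 (hG _ BP) XG) => x xX.
have := subsetP (subset_trans sXY sY) x xX.
by rewrite (disjointFr (disG _ _ BP B0P neB) (subsetP (sub_cover XG) x xX)).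
Qed.

Lemma restr_construction H L Y : construction H L -> Y \in L ->
  construction (restr H Y) (restr L Y).
Proof.
move=> cL; elim: cL Y => {H L}
  [|H x K hH atH c0 connH xH cK IH|H P Kf hH _ _ [hpP _] _ cKf IH] Y.
- by rewrite inE.
- have cL := constr_conn hH atH c0 connH xH cK.
  rewrite !inE => /orP[YK|/eqP->]; last by rewrite !restr_id ?subxx ?(construction_cover cL).
  have sYV : Y \subset cover H :\ x.
    exact: (subset_trans (sub_cover YK) (subset_trans (construction_cover cK) (cover_restr _ _))).
  rewrite restr_setU1; last first.
    by apply/negP => /subsetP/(_ x xH)/(subsetP sYV); rewrite !inE eqxx.
  by rewrite -(restr_restr H sYV); apply: IH.
move=> /bigcupP[B0 B0P YK]; have sYK := sub_cover YK.
have sKB B : B \in P -> cover (Kf B) \subset cover B.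
  by move=> BP; apply: construction_cover (cKf B BP).
case: (hpP) => _ disP.
rewrite (restr_bigcup_block B0P _ _ sYK); first last.
- by move=> B1 B2 B1P B2P /(disP _ _ B1P B2P); apply: disjointW; apply: sKB.
- by move=> B BP; apply: construction_hypergraph (cKf B BP).
rewrite -(hpartition_cover hpP) (restr_bigcup_block (G := id) B0P _ disP).
- exact: IH.
- by move=> B BP; apply: (hypergraphS (hpartition_subset hpP BP) hH).
- exact: (subset_trans sYK (sKB _ B0P)).
Qed.

Lemma disjoint_of_cover F1 F2 : hypergraph F1 ->
  [disjoint cover F1 & cover F2] -> [disjoint F1 & F2].
Proof.
move=> hF1 disF; rewrite -setI_eq0; apply/eqP/setP => X; rewrite !inE.
apply/negP => /andP[X1 X2]; case/negP: (hypergraph_neq0 hF1 X1); apply/eqP.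
exact: disjoint_subset_eq0 (disjointW (sub_cover X1) (sub_cover X2) disF) (subxx X).
Qed.

Section TraceHPartition.
Variables (H : {set {set T}}) (P : {set {set {set T}}}) (Z : {set T}).
Hypothesis hpH : hpartition H P.

Let Pz := [set B in P | trace Z B != set0].

Lemma trace_block_inj : {in Pz &, injective (trace Z)}.
Proof.
move=> B1 B2 /setIdP[B1P /set0Pn[X X1]] /setIdP[B2P _] eT.
have sXB B : X \in trace Z B -> X \subset cover B.
  by move=> /sub_cover; rewrite cover_trace => /subset_trans; apply; apply: subsetIl.
apply: (hpartition_eq_subset hpH B1P B2P (hypergraph_neq0 (trace_hypergraph Z B1) X1)).
  exact: sXB.
by rewrite eT in X1; apply: sXB.
Qed.

Lemma hpartition_trace : hpartition (trace Z H) (trace Z @: Pz).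
Proof.
have disT B1 B2 : B1 \in P -> B2 \in P -> trace Z B1 != trace Z B2 ->
    [disjoint cover (trace Z B1) & cover (trace Z B2)].
  move=> B1P B2P neT; have neB : B1 != B2 by apply: contraNneq neT => ->.
  rewrite !cover_trace; apply: disjointW (subsetIl _ _) (subsetIl _ _) _.
  by case: hpH => _; apply.
split.
  2: by move=> _ _ /imsetP[B1 /setIdP[B1P _] ->] /imsetP[B2 /setIdP[B2P _] ->]; apply: disT.
apply/and3P; split.
- apply/eqP/setP => X; apply/bigcupP/idP => [[_ /imsetP[B /setIdP[BP _] ->]] | XT].
    case/traceP=> W WB h; apply/traceP; exists W => //.
    exact: subsetP (hpartition_subset hpH BP) W WB.
  case/traceP: (XT) => W WH [eX neX]; have [B BP WB] := hpartition_block hpH WH.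
  have XB : X \in trace Z B by apply/traceP; exists W.
  by exists (trace Z B) => //; apply/imsetP; exists B; rewrite // inE BP; apply/set0Pn; exists X.
- apply/trivIsetP => _ _ /imsetP[B1 /setIdP[B1P _] ->] /imsetP[B2 /setIdP[B2P _] ->] neT.
  exact: disjoint_of_cover (trace_hypergraph _ _) (disT _ _ B1P B2P neT).
- by apply/imsetP => -[B /setIdP[_ neT] eT]; rewrite -eT eqxx in neT.
Qed.

End TraceHPartition.

Lemma trace_construction_id H L Z : hypergraph H -> construction H L ->
  cover H \subset Z -> construction (trace Z H) (trace Z L).
Proof.
move=> hH cL sHZ; rewrite !trace_id //; first exact: construction_hypergraph cL.
exact: (subset_trans (construction_cover cL) sHZ).
Qed.

Lemma trace_construction_eq0 H L Z : construction H L -> cover H :&: Z = set0 ->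
  construction (trace Z H) (trace Z L).
Proof.
move=> cL HZ; have /eqP-> : trace Z H == set0 by rewrite trace_eq0 HZ.
have /eqP-> : trace Z L == set0.
  by rewrite trace_eq0 -subset0 -HZ setSI // construction_cover.
by constructor.
Qed.

Lemma trace_construction_conn H x K Z : atomic H -> saturated H -> connected H ->
    x \in cover H -> x \in Z ->
    construction (trace Z (restr H (cover H :\ x))) (trace Z K) ->
  construction (trace Z H) (trace Z (K :|: [set cover H])).
Proof.
move=> atH satH connH xH xZ cK.
have neHZ : cover H :&: Z != set0 by apply/set0Pn; exists x; rewrite inE xH.
rewrite traceU trace_set1 // -cover_trace; apply: (@constr_conn _ _ x).
- exact: trace_hypergraph.
- exact: trace_atomic.
- by rewrite card_gt0 cover_trace.
- by apply: trace_connected; rewrite ?trace_eq0.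
- by rewrite cover_trace inE xH.
- by rewrite cover_trace restr_trace.
Qed.

Lemma trace_construction_hpartition H P Kf Z : hypergraph H -> atomic H -> saturated H ->
    finest_hpartition H P -> (forall B, B \in P -> cover (Kf B) \subset cover B) ->
    (forall B, B \in P -> construction (trace Z B) (trace Z (Kf B))) ->
  construction (trace Z H) (trace Z (\bigcup_(B in P) Kf B)).
Proof.
move=> hH atH satH [hpP connP] sKf cKf.
have -> : trace Z (\bigcup_(B in P) Kf B) =
          \bigcup_(B in [set B in P | trace Z B != set0]) trace Z (Kf B).
  rewrite trace_bigcup; apply/setP => X; apply/bigcupP/bigcupP => [[B BP XK] | [B]].
    exists B => //; rewrite inE BP trace_eq0 /=.
    have : trace Z (Kf B) != set0 by apply/set0Pn; exists X.
    by rewrite trace_eq0; apply: contraNN; rewrite -!subset0; apply/subset_trans/setSI/sKf.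
  by rewrite inE => /andP[BP _]; exists B.
apply: construction_hpartition_imset (trace_hypergraph _ _) (trace_atomic atH)
  (hpartition_trace Z hpP) (trace_block_inj hpP) _ _ => B; rewrite inE => /andP[BP neT].
  exact: trace_connected (saturated_block hpP hH satH BP) (connP _ BP) neT.
exact: cKf.
Qed.

(* The second alternative holds for the blocks of a hypergraph partition that
   do not contain [cover H :\: Z]. *)
Lemma trace_construction H L Z : construction H L -> saturated H ->
  cover H :\: Z \in L \/ cover H \subset Z -> construction (trace Z H) (trace Z L).
Proof.
move=> cL; elim: cL Z => {H L}
  [|H x K hH atH c0 connH xH cK IH|H P Kf hH atH nc fin c2 cKf IH] Z satH.
- by move=> _; apply: trace_construction_eq0; [constructor | rewrite /cover big_set0 set0I].
- have cL := constr_conn hH atH c0 connH xH cK.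
  case=> [|sHZ]; last exact: trace_construction_id.
  rewrite !inE => /orP[YK | /eqP HZ].
    2: exact/(trace_construction_eq0 cL)/disjoint_setI0/setDidPl.
  have sYV : cover H :\: Z \subset cover H :\ x.
    exact: (subset_trans (sub_cover YK) (subset_trans (construction_cover cK) (cover_restr _ _))).
  have xZ : x \in Z.
    apply: contraT => nxZ; have /(subsetP sYV) : x \in cover H :\: Z by rewrite inE nxZ.
    by rewrite !inE eqxx.
  apply: (trace_construction_conn atH satH connH xH xZ); apply: IH (restr_saturated satH) _.
  by left; rewrite cover_restr_atomic ?subsetDl // setDDl (setUidPr _) ?sub1set.
- have cL := constr_split hH atH nc fin c2 cKf; have [hpP _] := fin.
  case=> [/bigcupP[B0 B0P YK] | sHZ]; last exact: trace_construction_id.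
  have sYB0 := subset_trans (sub_cover YK) (construction_cover (cKf _ B0P)).
  apply: (trace_construction_hpartition hH atH satH fin) => B BP.
    exact: construction_cover (cKf B BP).
  apply: (IH B BP Z (saturated_block hpP hH satH BP)); have [<- | neB] := eqVneq B0 B.
    left; suff -> : cover B0 :\: Z = cover H :\: Z by [].
    apply/eqP; rewrite eqEsubset setSD ?(hpartition_cover_subset hpP B0P) //=.
    by rewrite subsetD sYB0 disjoint_sym disjoint_setDr.
  right; apply/subsetP => y yB; apply: contraT => nyZ.
  have yY : y \in cover H :\: Z.
    by rewrite inE nyZ (subsetP (hpartition_cover_subset hpP BP) _ yB).
  by rewrite (hpartition_eq hpP B0P BP (subsetP sYB0 _ yY) yB) eqxx in neB.
Qed.

(** * Continuations *)

Lemma hunion_subl H X Y : X \subset hunion H X Y.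
Proof. by rewrite /hunion; case: ifP; rewrite ?subsetUl. Qed.

Lemma hunionIK H X Y Z : X \subset Z -> [disjoint Y & Z] -> hunion H X Y :&: Z = X.
Proof.
move=> sXZ disYZ; rewrite /hunion; case: ifP => _; last exact/setIidPl.
by rewrite setIUl (disjoint_setI0 disYZ) setU0; apply/setIidPl.
Qed.

Lemma hunion_setIDK H L V Y W : L \subset H -> laminar L -> separated H L ->
  Y \in L -> W \in L -> W \subset V -> ~~ (W \subset Y) -> hunion H (W :&: (V :\: Y)) Y = W.
Proof.
move=> sLH lamL sepL YL WL sWV nsWY; rewrite /hunion.
case/or3P: (lamL _ _ WL YL) => [sWY | sYW | disWY]; first by rewrite sWY in nsWY.
  have -> : W :&: (V :\: Y) :|: Y = W.
    apply/eqP; rewrite eqEsubset subUset subsetIl sYW /=.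
    apply/subsetP => y yW; rewrite !inE yW (subsetP sWV _ yW).
    by case: (y \in Y).
  by rewrite (subsetP sLH _ WL).
have -> : W :&: (V :\: Y) = W by apply/setIidPl; rewrite subsetD sWV.
by rewrite (negbTE (sepL _ _ WL YL disWY)).
Qed.

Lemma cont_restr_trace H L V Y : L \subset H -> laminar L -> separated H L ->
  Y \in L -> cover L \subset V -> cont H Y (restr L Y) (trace (V :\: Y) L) = L.
Proof.
move=> sLH lamL sepL YL sLV; have sWV W : W \in L -> W \subset V.
  by move=> /sub_cover sWL; apply: (subset_trans sWL sLV).
have hunionW W : W \in L -> ~~ (W \subset Y) -> hunion H (W :&: (V :\: Y)) Y = W.
  by move=> WL; apply: (hunion_setIDK sLH lamL sepL YL WL (sWV _ WL)).
apply/setP => W; rewrite /cont inE; apply/orP/idP => [[WLY | /imsetP[X XT ->]] | WL].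
- by move: WLY; rewrite in_restr => /andP[].
- case/traceP: XT => W' W'L [-> neW]; rewrite hunionW //; apply: contraNN neW => sW'Y.
  by rewrite setI_eq0; apply: (disjointWl sW'Y (disjoint_setDr Y V)).
case sWY: (W \subset Y); [left; by rewrite in_restr WL | right].
apply/imsetP; exists (W :&: (V :\: Y)); last by rewrite hunionW ?sWY.
apply/traceP; exists W => //; split=> //; rewrite setI_eq0; apply: contraFN sWY => disW.
apply/subsetP => y yW; apply: contraT => nyY.
by rewrite -(disjointFr disW yW) inE nyY (subsetP (sWV W WL) y yW).
Qed.

Lemma restr_cont H Y K J : cover K \subset Y -> hypergraph J -> [disjoint cover J & Y] ->
  restr (cont H Y K J) Y = K.
Proof.
move=> sKY hJ disJY; apply/setP => W; rewrite in_restr /cont inE.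
case WK: (W \in K); first by rewrite (subset_trans (sub_cover WK) sKY).
apply/negP => /andP[/imsetP[X XJ ->] sXY]; case/negP: (hypergraph_neq0 hJ XJ); apply/eqP.
exact: disjoint_subset_eq0 (disjointWl (sub_cover XJ) disJY) (subset_trans (hunion_subl H X Y) sXY).
Qed.

Lemma trace_cont H Y Z K J : cover K \subset Y -> hypergraph J -> cover J \subset Z ->
  [disjoint Y & Z] -> trace Z (cont H Y K J) = J.
Proof.
move=> sKY hJ sJZ disYZ; rewrite traceU.
have /eqP-> : trace Z K == set0 by rewrite trace_eq0 setI_eq0; apply: disjointWl sKY disYZ.
have sXZ X : X \in J -> X \subset Z by move=> /sub_cover sXJ; apply: (subset_trans sXJ sJZ).
rewrite set0U; apply/setP => X; apply/traceP/idP => [[_ /imsetP[X' X'J ->] [-> _]] | XJ].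
  by rewrite hunionIK ?sXZ.
exists (hunion H X Y); first by apply/imsetP; exists X.
by rewrite hunionIK ?sXZ // (hypergraph_neq0 hJ XJ).
Qed.

End Hypergraphs.

Theorem proposition7p8 (T : finType) (H L : {set {set T}}) (Y : {set T}) :
  ASC H -> construction H L -> Y \in L ->
  [/\ construction (restr H Y) (restr L Y),
      construction (trace (cover H :\: Y) H) (trace (cover H :\: Y) L),
      cont H Y (restr L Y) (trace (cover H :\: Y) L) = L &
      forall K J : {set {set T}},
        construction (restr H Y) K ->
        construction (trace (cover H :\: Y) H) J ->
        cont H Y K J = L ->
        K = restr L Y /\ J = trace (cover H :\: Y) L].
Proof.
move=> [_ _ satH _] cL YL; set Z := cover H :\: Y.
have sYH : Y \subset cover H := subset_trans (sub_cover YL) (construction_cover cL).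
split.
- exact: restr_construction.
- apply: trace_construction cL satH _; left.
  by rewrite /Z setDDr setDv set0U (setIidPr sYH).
- exact: cont_restr_trace (construction_subset cL satH) (construction_laminar cL)
    (construction_separated cL) YL (construction_cover cL).
move=> K J cK cJ <-.
have sKY : cover K \subset Y := subset_trans (construction_cover cK) (cover_restr H Y).
have sJZ : cover J \subset Z.
  by apply: subset_trans (construction_cover cJ) _; rewrite cover_trace subsetIr.
have hJ := construction_hypergraph cJ.
by rewrite restr_cont ?trace_cont ?disjoint_setDr // disjoint_sym (disjointWr sJZ) ?disjoint_setDr.
Qed.
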